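(* Let $b>0$ and let $\psi(x;a,\sigma)$ be as in the context, with $\psi^{(k)}$ its $k$-th derivative in $x$. For every $k\in\mathbb{N}\cup\{0\}$ and $x\in\mathbb{R}$, $$\frac{\partial}{\partial a}\Big(\frac{\psi^{(k)}(x;a,\sigma)}{\psi^{(k+1)}(x;a,\sigma)}\Big)=\frac{\psi^{(k)}(x;a,\sigma)\psi^{(k+2)}(x;a,\sigma)-\psi^{(k+1)}(x;a,\sigma)^2}{b\,\psi^{(k+1)}(x;a,\sigma)^2}>0.$$
   Context: Constants $b>0$, $\rho>0$; parameters $a\in\mathbb{R}$, $\sigma>0$. For $\beta<0$, $D_\beta(x)=\frac{e^{-x^2/4}}{\Gamma(-\beta)}\int_0^\infty t^{-\beta-1}e^{-t^2/2-xt}dt$, and $\psi(x;a,\sigma)=e^{\frac{(bx-a)^2}{2\sigma^2 b}}D_{-\rho/b}\big(-\frac{bx-a}{\sigma b}\sqrt{2b}\big)$, the positive strictly increasing fundamental solution of $\frac12\sigma^2u''+(a-bx)u'-\rho u=0$. *)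

From Stdlib Require Import Reals.
From Coquelicot Require Import Coquelicot.
Open Scope R_scope.

Definition Gamma_fn (s : R) : R :=
  RInt_gen (fun t => Rpower t (s - 1) * exp (- t))
           (at_right 0) (Rbar_locally p_infty).

(* Parabolic cylinder function for beta < 0:
   D_beta(y) = e^{-y^2/4}/Gamma(-beta) * int_0^oo t^{-beta-1} e^{-t^2/2 - y t} dt *)
Definition D_par (beta y : R) : R :=
  exp (- y ^ 2 / 4) / Gamma_fn (- beta) *
  RInt_gen (fun t => Rpower t (- beta - 1) * exp (- t ^ 2 / 2 - y * t))
           (at_right 0) (Rbar_locally p_infty).

Definition psi (b rho a sigma x : R) : R :=
  exp ((b * x - a) ^ 2 / (2 * sigma ^ 2 * b)) *
  D_par (- rho / b) (- ((b * x - a) / (sigma * b)) * sqrt (2 * b)).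

(* Substituting into the integral defining [D_par] gives
   psi(x) = J_(nu-1)(s) / Gamma(nu) with nu = rho/b, s = sqrt(2b)/sigma (x - a/b) and
   J_m(s) = int_0^oo t^m exp(-t^2/2 + s t) dt, written [moment m s] below.
   Differentiating under the integral sign gives J_m' = J_(m+1), so psi^(k) is a positive
   multiple of J_(nu-1+k)(s), and since ds/da = -sqrt(2b)/(sigma b) the a-derivative of
   psi^(k)/psi^(k+1) is (J_m J_(m+2) - J_(m+1)^2) / (b J_(m+1)^2) with m = nu-1+k.
   This is positive by the strict Cauchy-Schwarz inequality J_(m+1)^2 < J_m J_(m+2). *)

From Stdlib Require Import Reals Lra FunctionalExtensionality.
From Coquelicot Require Import Coquelicot.
Open Scope R_scope.

Lemma at_right_0_interval (c : R) : 0 < c -> at_right 0 (fun a => 0 < a < c).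
Proof.
  intros Hc. exists (mkposreal c Hc). intros y Hy Hy0.
  change (Rabs (y - 0) < c) in Hy. rewrite Rminus_0_r in Hy.
  apply Rabs_lt_between in Hy. lra.
Qed.

Section Nonnegative_improper_integral.

Variable f : R -> R.
Hypothesis f_cont : forall t, 0 < t -> continuous f t.
Hypothesis f_ge0 : forall t, 0 < t -> 0 <= f t.

Lemma ex_RInt_pos a b : 0 < a -> 0 < b -> ex_RInt f a b.
Proof.
  intros Ha Hb. apply (@ex_RInt_continuous R_CompleteNormedModule).
  intros z [Hz _]. apply f_cont.
  apply Rlt_le_trans with (2 := Hz). apply Rmin_case; lra.
Qed.

Lemma RInt_ge0_pos a b : 0 < a <= b -> 0 <= RInt f a b.
Proof.
  intros Hab. apply RInt_ge_0; try lra.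
  - apply ex_RInt_pos; lra.
  - intros t Ht. apply f_ge0. lra.
Qed.

Lemma RInt_le_widen a b a' b' :
  0 < a' <= a -> a <= b <= b' -> RInt f a b <= RInt f a' b'.
Proof.
  intros Ha Hb.
  rewrite <- (RInt_Chasles f a' a b') by (apply ex_RInt_pos; lra).
  rewrite <- (RInt_Chasles f a b b') by (apply ex_RInt_pos; lra).
  assert (0 <= RInt f a' a) by (apply RInt_ge0_pos; lra).
  assert (0 <= RInt f b b') by (apply RInt_ge0_pos; lra).
  unfold plus; simpl. lra.
Qed.

(* The improper integral is the supremum of the integrals over compact subintervals. *)
Lemma ex_RInt_gen_bounded (M : R) :
  (forall a b, 0 < a <= b -> RInt f a b <= M) ->
  ex_RInt_gen f (at_right 0) (Rbar_locally p_infty).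
Proof.
  intros HM.
  set (E := fun v => exists a b, 0 < a <= b /\ v = RInt f a b).
  assert (E_bound : bound E) by (exists M; intros v (a & b & Hab & ->); auto).
  assert (E_inhabited : exists v, E v) by (exists (RInt f 1 1), 1, 1; split; [lra | easy]).
  destruct (completeness E E_bound E_inhabited) as [L [L_ub L_least]].
  exists L. intros P [eps HP].
  assert (near_sup : exists a0 b0, 0 < a0 <= b0 /\ L - eps < RInt f a0 b0).
  { apply Classical_Prop.NNPP. intros Hn.
    assert (L <= L - eps).
    { apply L_least. intros v (a & b & Hab & ->).
      apply Rnot_lt_le. intros Hlt. apply Hn. exists a, b. auto. }
    destruct eps; simpl in *; lra. }
  destruct near_sup as (a0 & b0 & Hab0 & Hv).
  apply Filter_prod with (Q := fun a => 0 < a < a0) (R := fun b => b0 < b).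
  - apply at_right_0_interval. lra.
  - exists b0. auto.
  - intros a b Ha Hb. exists (RInt f a b). split.
    + apply (@RInt_correct R_CompleteNormedModule), ex_RInt_pos; lra.
    + apply HP. change (Rabs (RInt f a b - L) < eps).
      assert (RInt f a b <= L) by (apply L_ub; exists a, b; split; [lra | easy]).
      assert (RInt f a0 b0 <= RInt f a b) by (apply RInt_le_widen; lra).
      apply Rabs_lt_between. lra.
Qed.

Lemma RInt_le_is_RInt_gen l c d :
  0 < c <= d -> is_RInt_gen f (at_right 0) (Rbar_locally p_infty) l ->
  RInt f c d <= l.
Proof.
  intros Hcd Hl. apply Rnot_lt_le. intros Hlt.
  assert (He : 0 < RInt f c d - l) by lra.
  destruct (Hl (ball l (mkposreal _ He))) as [Q R HQ HR HQR].
  { exists (mkposreal _ He). auto. }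
  assert (HQ' : at_right 0 (fun a => Q a /\ 0 < a < c))
    by (apply filter_and; auto; apply at_right_0_interval; lra).
  assert (HR' : Rbar_locally p_infty (fun b => R b /\ d < b))
    by (apply filter_and; auto; exists d; auto).
  destruct (filter_ex _ HQ') as [a [HQa Ha]].
  destruct (filter_ex _ HR') as [b [HRb Hb]].
  destruct (HQR a b HQa HRb) as [I [HI Hball]]. simpl in HI.
  apply (@is_RInt_unique R_CompleteNormedModule) in HI. subst I.
  change (Rabs (RInt f a b - l) < RInt f c d - l) in Hball.
  assert (RInt f c d <= RInt f a b) by (apply RInt_le_widen; lra).
  apply Rabs_lt_between in Hball. lra.
Qed.

Lemma is_RInt_gen_gt0 l c d :
  0 < c < d -> (forall t, c < t < d -> 0 < f t) ->
  is_RInt_gen f (at_right 0) (Rbar_locally p_infty) l -> 0 < l.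
Proof.
  intros Hcd Hpos Hl. apply Rlt_le_trans with (RInt f c d).
  - apply RInt_gt_0; try lra; auto. intros t Ht. apply f_cont. lra.
  - apply RInt_le_is_RInt_gen; auto. lra.
Qed.

End Nonnegative_improper_integral.

Lemma exp_le_compat x y : x <= y -> exp x <= exp y.
Proof. intros [Hlt | ->]; [apply Rlt_le, exp_increasing | apply Rle_refl]; auto. Qed.

Lemma Rpower_gt0 t m : 0 < Rpower t m.
Proof. apply exp_pos. Qed.

Lemma continuous_Rpower m t : 0 < t -> continuous (fun u => Rpower u m) t.
Proof.
  intros Ht. apply (@ex_derive_continuous R_AbsRing R_NormedModule).
  unfold Rpower. auto_derive. lra.
Qed.

Lemma RInt_Rpower_le m a : -1 < m -> 0 < a <= 1 ->
  RInt (fun t => Rpower t m) a 1 <= / (m + 1).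
Proof.
  intros Hm Ha.
  assert (Hprim : is_RInt (fun t => Rpower t m) a 1
            (Rpower 1 (m + 1) / (m + 1) - Rpower a (m + 1) / (m + 1))).
  { apply (@is_RInt_derive R_CompleteNormedModule (fun t => Rpower t (m + 1) / (m + 1))).
    - intros t Ht. assert (0 < t) by (apply Rlt_le_trans with (2 := proj1 Ht), Rmin_case; lra).
      unfold Rpower. auto_derive; [lra |].
      replace ((m + 1) * ln t) with (m * ln t + ln t) by ring.
      rewrite exp_plus, exp_ln by lra. field. lra.
    - intros u Hu. apply continuous_Rpower.
      apply Rlt_le_trans with (2 := proj1 Hu), Rmin_case; lra. }
  rewrite (is_RInt_unique _ _ _ _ Hprim).
  unfold Rpower at 1. rewrite ln_1, Rmult_0_r, exp_0.
  assert (0 < Rpower a (m + 1) / (m + 1)) by (apply Rdiv_lt_0_compat; [apply Rpower_gt0 | lra]).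
  unfold Rdiv in *. lra.
Qed.

Lemma RInt_exp_half_le b : 1 <= b -> RInt (fun t => exp (- t / 2)) 1 b <= 2.
Proof.
  intros Hb.
  assert (Hprim : is_RInt (fun t => exp (- t / 2)) 1 b (-2 * exp (- b / 2) - -2 * exp (- 1 / 2))).
  { apply (@is_RInt_derive R_CompleteNormedModule (fun t => -2 * exp (- t / 2))).
    - intros t _. auto_derive; [easy |]. unfold Rdiv. field.
    - intros t _. apply (@ex_derive_continuous R_AbsRing R_NormedModule). auto_derive. easy. }
  rewrite (is_RInt_unique _ _ _ _ Hprim).
  assert (exp (- 1 / 2) <= 1) by (rewrite <- exp_0; apply exp_le_compat; lra).
  pose proof (exp_pos (- b / 2)). lra.
Qed.

Lemma ex_RInt_exp_half a b : ex_RInt (fun t => exp (- t / 2)) a b.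
Proof.
  apply (@ex_RInt_continuous R_CompleteNormedModule). intros t _.
  apply (@ex_derive_continuous R_AbsRing R_NormedModule). auto_derive. easy.
Qed.

Lemma mul_ln_le_half_linear m t :
  1 <= t -> m * ln t <= t / 2 + Rabs m * Rabs (ln (2 * Rabs m + 2)).
Proof.
  intros Ht. set (p := 2 * Rabs m + 2).
  assert (Hp : 0 < p) by (unfold p; pose proof (Rabs_pos m); lra).
  assert (ln_t_le : ln t <= t / p - 1 + ln p).
  { pose proof (exp_ineq1_le (ln (t / p))) as H.
    rewrite exp_ln, ln_div in H by (try apply Rdiv_lt_0_compat; lra). lra. }
  assert (0 <= ln t) by (rewrite <- ln_1; apply ln_le; lra).
  assert (m * ln t <= Rabs m * ln t) by (apply Rmult_le_compat_r; [lra | apply Rle_abs]).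
  assert (Rabs m * (t / p) <= t / 2).
  { unfold Rdiv. apply Rmult_le_reg_r with p; [lra |].
    replace (Rabs m * (t * / p) * p) with (Rabs m * t) by (field; lra).
    unfold p. pose proof (Rabs_pos m). nra. }
  assert (Rabs m * ln p <= Rabs m * Rabs (ln p))
    by (apply Rmult_le_compat_l; [apply Rabs_pos | apply Rle_abs]).
  pose proof (Rabs_pos m). nra.
Qed.

Section Rpower_exp_integral.

Variables (m B : R) (g : R -> R).
Hypothesis m_gt : -1 < m.
Hypothesis g_cont : forall t, 0 < t -> continuous g t.
Hypothesis g_le : forall t, 0 < t -> g t <= B - t.

Let f t := Rpower t m * exp (g t).

Lemma continuous_Rpower_exp t : 0 < t -> continuous f t.
Proof.
  intros Ht. apply (continuous_mult (fun u => Rpower u m) (fun u => exp (g u))).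
  - apply continuous_Rpower, Ht.
  - apply continuous_comp; [auto |].
    apply (@ex_derive_continuous R_AbsRing R_NormedModule). auto_derive. easy.
Qed.

Lemma Rpower_exp_gt0 t : 0 < f t.
Proof. apply Rmult_lt_0_compat; [apply Rpower_gt0 | apply exp_pos]. Qed.

Let f_ge0 t (_ : 0 < t) : 0 <= f t := Rlt_le _ _ (Rpower_exp_gt0 t).

Let ex_RInt_f a b : 0 < a -> 0 < b -> ex_RInt f a b := ex_RInt_pos f continuous_Rpower_exp a b.

Lemma RInt_Rpower_exp_near0_le a : 0 < a <= 1 -> RInt f a 1 <= exp B / (m + 1).
Proof.
  intros Ha.
  assert (ex_Rpower : ex_RInt (fun t => Rpower t m) a 1)
    by (apply (ex_RInt_pos _ (continuous_Rpower m)); lra).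
  apply Rle_trans with (RInt (fun t => exp B * Rpower t m) a 1).
  - apply RInt_le; [lra | apply ex_RInt_f; lra | apply (ex_RInt_scal _ _ _ _ ex_Rpower) |].
    intros t Ht. unfold f. rewrite Rmult_comm.
    apply Rmult_le_compat_r; [apply Rlt_le, Rpower_gt0 |].
    apply exp_le_compat. specialize (g_le t ltac:(lra)). lra.
  - rewrite (RInt_scal _ _ _ _ ex_Rpower).
    apply Rmult_le_compat_l; [apply Rlt_le, exp_pos | apply RInt_Rpower_le; auto].
Qed.

Lemma RInt_Rpower_exp_far_le b :
  1 <= b -> RInt f 1 b <= exp (B + Rabs m * Rabs (ln (2 * Rabs m + 2))) * 2.
Proof.
  intros Hb. set (K := exp (B + Rabs m * Rabs (ln (2 * Rabs m + 2)))).
  apply Rle_trans with (RInt (fun t => K * exp (- t / 2)) 1 b).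
  - apply RInt_le; [lra | apply ex_RInt_f; lra | apply (ex_RInt_scal _ _ _ _ (ex_RInt_exp_half 1 b)) |].
    intros t Ht. unfold f, K, Rpower. rewrite <- !exp_plus. apply exp_le_compat.
    pose proof (mul_ln_le_half_linear m t ltac:(lra)). specialize (g_le t ltac:(lra)). lra.
  - rewrite (RInt_scal _ _ _ _ (ex_RInt_exp_half 1 b)).
    apply Rmult_le_compat_l; [apply Rlt_le, exp_pos | apply RInt_exp_half_le, Hb].
Qed.

Lemma ex_RInt_gen_Rpower_exp : ex_RInt_gen f (at_right 0) (Rbar_locally p_infty).
Proof.
  apply (ex_RInt_gen_bounded f continuous_Rpower_exp f_ge0
           (exp B / (m + 1) + exp (B + Rabs m * Rabs (ln (2 * Rabs m + 2))) * 2)).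
  intros a b Hab.
  set (a' := Rmin a 1). set (b' := Rmax b 1).
  assert (Ha' : 0 < a' <= 1) by (unfold a'; split; [apply Rmin_case; lra | apply Rmin_r]).
  assert (Hb' : 1 <= b') by apply Rmax_r.
  assert (Hwiden : RInt f a b <= RInt f a' b').
  { apply (RInt_le_widen f continuous_Rpower_exp f_ge0);
      [split; [lra | apply Rmin_l] | split; [lra | apply Rmax_l]]. }
  rewrite <- (RInt_Chasles f a' 1 b') in Hwiden by (apply ex_RInt_f; lra).
  pose proof (RInt_Rpower_exp_near0_le a' Ha'). pose proof (RInt_Rpower_exp_far_le b' Hb').
  unfold plus in Hwiden; simpl in Hwiden. lra.
Qed.

Lemma RInt_gen_Rpower_exp_gt0 :
  0 < RInt_gen f (at_right 0) (Rbar_locally p_infty).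
Proof.
  apply (is_RInt_gen_gt0 f continuous_Rpower_exp f_ge0 _ 1 2); [lra | |].
  - intros t _. apply Rpower_exp_gt0.
  - apply (@RInt_gen_correct R_CompleteNormedModule); try apply Proper_StrongProper.
    + apply at_right_proper_filter.
    + apply Rbar_locally_filter.
    + apply ex_RInt_gen_Rpower_exp.
Qed.

End Rpower_exp_integral.

Definition weight (m s t : R) : R := Rpower t m * exp (- t ^ 2 / 2 + s * t).

Definition moment (m s : R) : R :=
  RInt_gen (weight m s) (at_right 0) (Rbar_locally p_infty).

Lemma weight_gt0 m s t : 0 < weight m s t.
Proof. apply (Rpower_exp_gt0 m (fun t => - t ^ 2 / 2 + s * t)). Qed.

Lemma continuous_weight_exponent s t : continuous (fun t => - t ^ 2 / 2 + s * t) t.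
Proof. apply (@ex_derive_continuous R_AbsRing R_NormedModule). auto_derive. easy. Qed.

Lemma weight_exponent_le s t : - t ^ 2 / 2 + s * t <= (s + 1) ^ 2 / 2 - t.
Proof. pose proof (pow2_ge_0 (t - (s + 1))). nra. Qed.

Lemma continuous_weight m s t : 0 < t -> continuous (weight m s) t.
Proof.
  apply (continuous_Rpower_exp m (fun t => - t ^ 2 / 2 + s * t)).
  intros u _. apply continuous_weight_exponent.
Qed.

Lemma is_RInt_gen_moment m s : -1 < m ->
  is_RInt_gen (weight m s) (at_right 0) (Rbar_locally p_infty) (moment m s).
Proof.
  intros Hm. apply (@RInt_gen_correct R_CompleteNormedModule); try apply Proper_StrongProper.
  - apply at_right_proper_filter.
  - apply Rbar_locally_filter.
  - apply (ex_RInt_gen_Rpower_exp m ((s + 1) ^ 2 / 2) (fun t => - t ^ 2 / 2 + s * t)); auto.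
    + intros t _. apply continuous_weight_exponent.
    + intros t _. apply weight_exponent_le.
Qed.

Lemma moment_gt0 m s : -1 < m -> 0 < moment m s.
Proof.
  intros Hm.
  apply (RInt_gen_Rpower_exp_gt0 m ((s + 1) ^ 2 / 2) (fun t => - t ^ 2 / 2 + s * t)); auto.
  - intros t _. apply continuous_weight_exponent.
  - intros t _. apply weight_exponent_le.
Qed.

Lemma weight_succ m s t : 0 < t -> weight (m + 1) s t = t * weight m s t.
Proof. intros Ht. unfold weight. rewrite Rpower_plus, Rpower_1 by exact Ht. ring. Qed.

Lemma weight_add2 m s t : 0 < t -> weight (m + 2) s t = t ^ 2 * weight m s t.
Proof. intros Ht. replace (m + 2) with (m + 1 + 1) by ring. rewrite !weight_succ by exact Ht. ring. Qed.

Lemma weight_shift m s h t : weight m (s + h) t = weight m s t * exp (h * t).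
Proof. unfold weight. rewrite Rmult_assoc, <- exp_plus. f_equal. f_equal. ring. Qed.

Lemma exp_sub1_le y : Rabs (exp y - 1) <= Rabs y * exp (Rabs y).
Proof.
  destruct (MVT_cor4 exp exp 0 (Rabs y)) with (b := y) as [c [Hc Hcy]].
  - intros c _. apply is_derive_Reals, derivable_pt_lim_exp.
  - rewrite Rminus_0_r. lra.
  - rewrite exp_0, !Rminus_0_r in Hc. rewrite !Rminus_0_r in Hcy.
    rewrite Hc, Rabs_mult, Rmult_comm, (Rabs_pos_eq (exp c)) by (apply Rlt_le, exp_pos).
    apply Rmult_le_compat_l; [apply Rabs_pos |].
    apply exp_le_compat. pose proof (Rle_abs c). lra.
Qed.

Lemma exp_sub1_sub_le y : Rabs (exp y - 1 - y) <= y ^ 2 * exp (Rabs y).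
Proof.
  destruct (MVT_cor4 (fun u => exp u - u) (fun u => exp u - 1) 0 (Rabs y)) with (b := y)
    as [c [Hc Hcy]].
  - intros c _. auto_derive; [easy | ring].
  - rewrite Rminus_0_r. lra.
  - rewrite exp_0, !Rminus_0_r in Hc. rewrite !Rminus_0_r in Hcy.
    replace (exp y - 1 - y) with ((exp c - 1) * y) by lra.
    rewrite Rabs_mult, <- pow2_abs.
    pose proof (exp_sub1_le c). pose proof (Rabs_pos c). pose proof (Rabs_pos y).
    assert (exp (Rabs c) <= exp (Rabs y)) by (apply exp_le_compat; lra).
    assert (Rabs c * exp (Rabs c) <= Rabs y * exp (Rabs y))
      by (apply Rmult_le_compat; [| apply Rlt_le, exp_pos | |]; lra).
    apply Rle_trans with (Rabs c * exp (Rabs c) * Rabs y); [apply Rmult_le_compat_r; lra |].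
    replace (Rabs y ^ 2 * exp (Rabs y)) with (Rabs y * exp (Rabs y) * Rabs y) by ring.
    apply Rmult_le_compat_r; lra.
Qed.

Lemma weight_diff_quot_le m s h t : 0 < t -> h <> 0 -> Rabs h <= 1 ->
  Rabs ((weight m (s + h) t - weight m s t) / h - weight (m + 1) s t)
    <= Rabs h * weight (m + 2) (s + 1) t.
Proof.
  intros Ht Hh Hh1.
  assert (Hw := weight_gt0 m s t).
  assert (Hsplit : (weight m (s + h) t - weight m s t) / h - weight (m + 1) s t
                   = weight m s t * (exp (h * t) - 1 - h * t) / h)
    by (rewrite weight_shift, weight_succ by exact Ht; field; exact Hh).
  assert (Hm2 : weight (m + 2) (s + 1) t = t ^ 2 * exp t * weight m s t).
  { rewrite weight_add2, weight_shift, Rmult_1_l by exact Ht. ring. }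
  assert (Htaylor : Rabs (exp (h * t) - 1 - h * t) <= (Rabs h * t) ^ 2 * exp t).
  { apply Rle_trans with (1 := exp_sub1_sub_le (h * t)).
    rewrite <- pow2_abs, Rabs_mult, (Rabs_pos_eq t) by lra.
    apply Rmult_le_compat_l; [apply pow2_ge_0 | apply exp_le_compat; nra]. }
  assert (Hah : 0 < Rabs h) by (apply Rabs_pos_lt, Hh).
  rewrite Hsplit, Hm2. unfold Rdiv.
  rewrite !Rabs_mult, Rabs_inv, (Rabs_pos_eq (weight m s t)) by lra.
  apply Rmult_le_reg_r with (Rabs h); [exact Hah |].
  rewrite Rmult_assoc, Rinv_l by lra.
  nra.
Qed.

Lemma filter_prod_right0_pinfty (P : R -> R -> Prop) :
  (forall a b, 0 < a < 1 -> 1 < b -> P a b) ->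
  filter_prod (at_right 0) (Rbar_locally p_infty) (fun ab => P (fst ab) (snd ab)).
Proof.
  intros HP. apply (Filter_prod _ _ _ (fun a => 0 < a < 1) (fun b => 1 < b)).
  - apply at_right_0_interval, Rlt_0_1.
  - exists 1. auto.
  - exact HP.
Qed.

Lemma moment_diff_quot_le m s h : -1 < m -> h <> 0 -> Rabs h <= 1 ->
  Rabs ((moment m (s + h) - moment m s) / h - moment (m + 1) s)
    <= Rabs h * moment (m + 2) (s + 1).
Proof.
  intros Hm Hh Hh1.
  assert (Hdiff := is_RInt_gen_minus _ _ _ _
    (is_RInt_gen_moment m (s + h) Hm) (is_RInt_gen_moment m s Hm)).
  apply (is_RInt_gen_scal _ (/ h)) in Hdiff.
  assert (Hquot := is_RInt_gen_minus _ _ _ _ Hdiff (is_RInt_gen_moment (m + 1) s ltac:(lra))).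
  assert (Hbound := is_RInt_gen_moment (m + 2) (s + 1) ltac:(lra)).
  apply (is_RInt_gen_scal _ (Rabs h)) in Hbound.
  replace ((moment m (s + h) - moment m s) / h - moment (m + 1) s)
    with (/ h * (moment m (s + h) - moment m s) - moment (m + 1) s) by (field; exact Hh).
  refine (RInt_gen_norm (Fa := at_right 0) (Fb := Rbar_locally p_infty) _ _ _ _
            (filter_prod_right0_pinfty Rle ltac:(intros; lra)) _ Hquot Hbound).
  apply (filter_prod_right0_pinfty (fun a b => forall t, a <= t <= b -> _)).
  intros a b Ha Hb t Ht.
  change (Rabs (/ h * (weight m (s + h) t - weight m s t) - weight (m + 1) s t)
            <= Rabs h * weight (m + 2) (s + 1) t).
  rewrite Rmult_comm. apply weight_diff_quot_le; auto. lra.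
Qed.

Lemma is_derive_of_diff_quot_le (f : R -> R) s l C :
  (forall h, h <> 0 -> Rabs h <= 1 -> Rabs ((f (s + h) - f s) / h - l) <= C * Rabs h) ->
  is_derive f s l.
Proof.
  intros Hquot. apply is_derive_Reals. intros eps Heps.
  set (K := Rabs C + 1).
  assert (HK : 0 < K) by (unfold K; pose proof (Rabs_pos C); lra).
  assert (Hdelta : 0 < Rmin 1 (eps / K)) by (apply Rmin_case; [lra | apply Rdiv_lt_0_compat; lra]).
  exists (mkposreal _ Hdelta). intros h Hh Hsmall. simpl in Hsmall.
  assert (Hh1 : Rabs h <= 1) by (pose proof (Rmin_l 1 (eps / K)); lra).
  assert (Hh2 : Rabs h * K < eps).
  { apply Rmult_lt_reg_r with (/ K); [apply Rinv_0_lt_compat, HK |].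
    rewrite Rmult_assoc, Rinv_r by lra. pose proof (Rmin_r 1 (eps / K)). unfold Rdiv in *. lra. }
  apply Rle_lt_trans with (1 := Hquot h Hh Hh1).
  pose proof (Rle_abs C). pose proof (Rabs_pos h). unfold K in Hh2. nra.
Qed.

Lemma is_derive_moment m s : -1 < m -> is_derive (moment m) s (moment (m + 1) s).
Proof.
  intros Hm. apply (is_derive_of_diff_quot_le _ _ _ (moment (m + 2) (s + 1))).
  intros h Hh Hh1. rewrite Rmult_comm. apply moment_diff_quot_le; auto.
Qed.

(* Strict Cauchy-Schwarz: with l = J_(m+1) / J_m, J_(m+2) - 2 l J_(m+1) + l^2 J_m is the
   integral of [weight m s t * (t - l) ^ 2] > 0. *)
Lemma moment_sq_lt m s : -1 < m -> moment (m + 1) s ^ 2 < moment m s * moment (m + 2) s.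
Proof.
  intros Hm.
  assert (HJ0 := moment_gt0 m s Hm).
  set (J0 := moment m s) in *. set (J1 := moment (m + 1) s). set (J2 := moment (m + 2) s).
  set (lam := J1 / J0).
  assert (Hcomb : is_RInt_gen (fun t => weight m s t * (t - lam) ^ 2)
                    (at_right 0) (Rbar_locally p_infty) (J2 - 2 * lam * J1 + lam ^ 2 * J0)).
  { apply (is_RInt_gen_ext (fun t => plus (minus (weight (m + 2) s t) (scal (2 * lam) (weight (m + 1) s t)))
                                          (scal (lam ^ 2) (weight m s t)))).
    - apply (filter_prod_right0_pinfty (fun a b => forall t, Rmin a b < t < Rmax a b -> _)).
      intros a b Ha Hb t Ht. rewrite Rmin_left, Rmax_right in Ht by lra.
      unfold minus; unfold plus, scal, opp; simpl; unfold mult; simpl.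
      rewrite weight_add2, weight_succ by lra. ring.
    - assert (H0 := is_RInt_gen_moment m s Hm).
      assert (H1 := is_RInt_gen_moment (m + 1) s ltac:(lra)).
      assert (H2 := is_RInt_gen_moment (m + 2) s ltac:(lra)).
      apply (is_RInt_gen_scal _ (lam ^ 2)) in H0.
      apply (is_RInt_gen_scal _ (2 * lam)) in H1.
      exact (is_RInt_gen_plus _ _ _ _ (is_RInt_gen_minus _ _ _ _ H2 H1) H0). }
  assert (Hpos : 0 < J2 - 2 * lam * J1 + lam ^ 2 * J0).
  { refine (is_RInt_gen_gt0 _ _ _ _ (Rabs lam + 1) (Rabs lam + 2) _ _ Hcomb).
    - intros t Ht. apply (continuous_mult (weight m s) (fun t => (t - lam) ^ 2)).
      + apply continuous_weight, Ht.
      + apply (@ex_derive_continuous R_AbsRing R_NormedModule). auto_derive. easy.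
    - intros t _. pose proof (weight_gt0 m s t). pose proof (pow2_ge_0 (t - lam)). nra.
    - pose proof (Rabs_pos lam). lra.
    - intros t Ht. pose proof (Rle_abs lam).
      apply Rmult_lt_0_compat; [apply weight_gt0 | apply pow_lt; lra]. }
  replace (J2 - 2 * lam * J1 + lam ^ 2 * J0) with ((J0 * J2 - J1 ^ 2) / J0) in Hpos
    by (unfold lam; field; lra).
  apply Rmult_lt_compat_r with (r := J0) in Hpos; [| exact HJ0].
  unfold Rdiv in Hpos. rewrite Rmult_assoc, Rinv_l, Rmult_0_l in Hpos by lra. lra.
Qed.

Lemma is_derive_moment_comp m u x du : -1 < m -> is_derive u x du ->
  is_derive (fun y => moment m (u y)) x (du * moment (m + 1) (u x)).
Proof. intros Hm Hu. exact (is_derive_comp (moment m) u x _ _ (is_derive_moment m (u x) Hm) Hu). Qed.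

Lemma is_derive_moment_ratio_comp m u x du : -1 < m -> is_derive u x du ->
  is_derive (fun y => moment m (u y) / moment (m + 1) (u y)) x
    (du * (moment (m + 1) (u x) ^ 2 - moment m (u x) * moment (m + 2) (u x))
       / moment (m + 1) (u x) ^ 2).
Proof.
  intros Hm Hu.
  assert (HJ1 := moment_gt0 (m + 1) (u x) ltac:(lra)).
  assert (D := is_derive_div _ _ x _ _ (is_derive_moment_comp m u x du Hm Hu)
                 (is_derive_moment_comp (m + 1) u x du ltac:(lra) Hu) ltac:(lra)).
  replace (m + 1 + 1) with (m + 2) in D by ring.
  set (J0 := moment m (u x)) in *. set (J1 := moment (m + 1) (u x)) in *.
  set (J2 := moment (m + 2) (u x)) in *.
  replace (du * (J1 ^ 2 - J0 * J2) / J1 ^ 2) with ((du * J1 * J1 - J0 * (du * J2)) / J1 ^ 2)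
    by (field; lra).
  exact D.
Qed.

Lemma Derive_n_moment_affine m p q j x : -1 < m ->
  Derive_n (fun y => moment m (p * (y - q))) j x = p ^ j * moment (m + INR j) (p * (x - q)).
Proof.
  intros Hm. revert x. induction j as [| j IH]; intros x.
  - simpl. rewrite Rplus_0_r. ring.
  - simpl Derive_n. rewrite (Derive_ext _ _ x IH). apply is_derive_unique.
    replace (m + INR (S j)) with (m + INR j + 1) by (rewrite S_INR; ring).
    replace (p ^ S j * moment (m + INR j + 1) (p * (x - q)))
      with (p ^ j * (p * moment (m + INR j + 1) (p * (x - q)))) by (simpl; ring).
    apply is_derive_scal, (is_derive_moment_comp _ (fun y => p * (y - q))).
    + pose proof (pos_INR j). lra.
    + auto_derive; [easy | ring].
Qed.

Lemma Gamma_fn_gt0 nu : 0 < nu -> 0 < Gamma_fn nu.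
Proof.
  intros Hnu. apply (RInt_gen_Rpower_exp_gt0 (nu - 1) 0 (fun t => - t)).
  - lra.
  - intros t _. apply (@ex_derive_continuous R_AbsRing R_NormedModule). auto_derive. easy.
  - intros t _. lra.
Qed.

Lemma D_par_moment beta y :
  D_par beta y = exp (- y ^ 2 / 4) / Gamma_fn (- beta) * moment (- beta - 1) (- y).
Proof.
  unfold D_par, moment. do 2 f_equal. apply functional_extensionality. intros t.
  unfold weight. do 2 f_equal. ring.
Qed.

(* The Gaussian prefactor of [psi] cancels the factor [exp (- y ^ 2 / 4)] of [D_par]. *)
Lemma psi_moment b rho a sigma x : 0 < b -> 0 < sigma ->
  psi b rho a sigma x
  = / Gamma_fn (rho / b) * moment (rho / b - 1) (sqrt (2 * b) / sigma * (x - a / b)).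
Proof.
  intros Hb Hs. unfold psi. rewrite D_par_moment.
  set (y := - ((b * x - a) / (sigma * b)) * sqrt (2 * b)).
  assert (Hsq : sqrt (2 * b) * sqrt (2 * b) = 2 * b) by (apply sqrt_sqrt; lra).
  assert (Hcancel : exp ((b * x - a) ^ 2 / (2 * sigma ^ 2 * b)) * exp (- y ^ 2 / 4) = 1).
  { rewrite <- exp_plus, <- exp_0. f_equal. unfold y.
    replace ((- ((b * x - a) / (sigma * b)) * sqrt (2 * b)) ^ 2)
      with (((b * x - a) / (sigma * b)) ^ 2 * (sqrt (2 * b) * sqrt (2 * b))) by ring.
    rewrite Hsq. field. lra. }
  replace (- y) with (sqrt (2 * b) / sigma * (x - a / b)) by (unfold y; field; lra).
  replace (- (- rho / b)) with (rho / b) by (unfold Rdiv; ring).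
  rewrite <- (Rmult_1_l (/ Gamma_fn (rho / b) * _)), <- Hcancel. unfold Rdiv. ring.
Qed.

Lemma Derive_n_psi b rho a sigma j x : 0 < b -> 0 < rho -> 0 < sigma ->
  Derive_n (fun y => psi b rho a sigma y) j x
  = / Gamma_fn (rho / b) * (sqrt (2 * b) / sigma) ^ j
    * moment (rho / b - 1 + INR j) (sqrt (2 * b) / sigma * (x - a / b)).
Proof.
  intros Hb Hr Hs.
  rewrite (Derive_n_ext _ (fun y => / Gamma_fn (rho / b)
             * moment (rho / b - 1) (sqrt (2 * b) / sigma * (y - a / b))))
    by (intros; apply psi_moment; assumption).
  rewrite Derive_n_scal_l, Derive_n_moment_affine; [ring |].
  assert (0 < rho / b) by (apply Rdiv_lt_0_compat; assumption). lra.
Qed.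

Lemma moment_discriminant_gt0 m s c : -1 < m -> 0 < c ->
  0 < (moment m s * moment (m + 2) s - moment (m + 1) s ^ 2) / (c * moment (m + 1) s ^ 2).
Proof.
  intros Hm Hc. apply Rdiv_lt_0_compat.
  - pose proof (moment_sq_lt m s Hm). lra.
  - apply Rmult_lt_0_compat; [exact Hc | apply pow_lt, moment_gt0; lra].
Qed.

Section Psi_derivatives.

Variables (b rho sigma x : R) (k : nat).
Hypotheses (b_gt0 : 0 < b) (rho_gt0 : 0 < rho) (sigma_gt0 : 0 < sigma).

Local Notation dpsi a j := (Derive_n (fun y => psi b rho a sigma y) j x).
Local Notation p := (sqrt (2 * b) / sigma).
Local Notation s a := (p * (x - a / b)).
Local Notation mk := (rho / b - 1 + INR k).

Lemma psi_moment_index_gt : -1 < mk.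
Proof. pose proof (pos_INR k). pose proof (Rdiv_lt_0_compat _ _ rho_gt0 b_gt0). lra. Qed.

Let sqrt_gt0 : 0 < sqrt (2 * b).
Proof. apply sqrt_lt_R0. lra. Qed.

Let p_gt0 : 0 < p.
Proof. apply Rdiv_lt_0_compat; assumption. Qed.

Let Gamma_gt0 : 0 < Gamma_fn (rho / b).
Proof. apply Gamma_fn_gt0, Rdiv_lt_0_compat; assumption. Qed.

Lemma dpsi_ratio a : dpsi a k / dpsi a (S k) = / p * (moment mk (s a) / moment (mk + 1) (s a)).
Proof.
  rewrite !Derive_n_psi, S_INR by assumption.
  replace (rho / b - 1 + (INR k + 1)) with (mk + 1) by ring.
  assert (0 < moment (mk + 1) (s a)) by (apply moment_gt0; pose proof psi_moment_index_gt; lra).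
  assert (0 < p ^ k) by (apply pow_lt, p_gt0).
  simpl. field. repeat split; lra.
Qed.

Lemma dpsi_discriminant a :
  (dpsi a k * dpsi a (S (S k)) - dpsi a (S k) ^ 2) / (b * dpsi a (S k) ^ 2)
  = (moment mk (s a) * moment (mk + 2) (s a) - moment (mk + 1) (s a) ^ 2)
    / (b * moment (mk + 1) (s a) ^ 2).
Proof.
  rewrite !Derive_n_psi, !S_INR by assumption.
  replace (rho / b - 1 + (INR k + 1)) with (mk + 1) by ring.
  replace (rho / b - 1 + (INR k + 1 + 1)) with (mk + 2) by ring.
  assert (0 < moment (mk + 1) (s a)) by (apply moment_gt0; pose proof psi_moment_index_gt; lra).
  assert (0 < p ^ k) by (apply pow_lt, p_gt0).
  simpl. field. repeat split; lra.
Qed.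

Lemma is_derive_dpsi_ratio a :
  is_derive (fun a' => dpsi a' k / dpsi a' (S k)) a
    ((moment mk (s a) * moment (mk + 2) (s a) - moment (mk + 1) (s a) ^ 2)
     / (b * moment (mk + 1) (s a) ^ 2)).
Proof.
  apply (is_derive_ext (fun a' => / p * (moment mk (s a') / moment (mk + 1) (s a')))).
  { intros a'. symmetry. apply dpsi_ratio. }
  assert (0 < moment (mk + 1) (s a)) by (apply moment_gt0; pose proof psi_moment_index_gt; lra).
  replace ((moment mk (s a) * moment (mk + 2) (s a) - moment (mk + 1) (s a) ^ 2)
           / (b * moment (mk + 1) (s a) ^ 2))
    with (/ p * (- p / b * (moment (mk + 1) (s a) ^ 2 - moment mk (s a) * moment (mk + 2) (s a))
                 / moment (mk + 1) (s a) ^ 2))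
    by (field; repeat split; lra).
  apply is_derive_scal, (is_derive_moment_ratio_comp _ (fun a' => s a')).
  - apply psi_moment_index_gt.
  - auto_derive; [easy | field; lra].
Qed.

End Psi_derivatives.

Theorem lemma5p3 (b rho a sigma : R) (k : nat) (x : R) :
  0 < b -> 0 < rho -> 0 < sigma ->
  let dk := fun (a' : R) (j : nat) => Derive_n (fun y => psi b rho a' sigma y) j x in
  is_derive (fun a' => dk a' k / dk a' (S k)) a
    ((dk a k * dk a (S (S k)) - (dk a (S k)) ^ 2) / (b * (dk a (S k)) ^ 2))
  /\ 0 < (dk a k * dk a (S (S k)) - (dk a (S k)) ^ 2) / (b * (dk a (S k)) ^ 2).
Proof.
  intros Hb Hr Hs. cbv zeta beta.
  rewrite dpsi_discriminant by assumption.
  split.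
  - apply is_derive_dpsi_ratio; assumption.
  - apply moment_discriminant_gt0; [apply psi_moment_index_gt |]; assumption.
Qed.
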